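(* Let $R=F/I$ be a standard algebra, where $F=k\langle x_1,\dots,x_n\rangle$ and $x_1,\dots,x_n$ is a basis of $R_1$. The following are equivalent: (i) $R$ is initially Koszul with Groebner flag $(x_1,\dots,x_n)$; (ii) $R$ is PBW with respect to the degree-lexicographical order with $x_1<\dots<x_n$ (i.e. the reduced Groebner basis $G$ of $I$ with respect to this order consists of quadratic elements), and the set $\mathrm{lm}\,G$ of leading monomials of $G$ has the property: if $x_kx_j\in\mathrm{lm}\,G$ then $x_kx_i\in\mathrm{lm}\,G$ for all $i<j$; (iii) the monomial algebra $R'=F/(\mathrm{lm}\,G)$ (with $G$ the reduced Groebner basis of $I$ for the same order) is initially Koszul with Groebner flag $(x_1,\dots,x_n)$.
   Context: A standard algebra $R$: graded, $R_0=k$, generated by $R_1$; $R_+=\bigoplus_{i>0}R_i$. For a basis $x_1,\dots,x_n$ of $R_1$ let $I_k=x_1R+\dots+x_kR$ ($I_0=0$). A Koszul filtration is a family $\mathbf F$ of right ideals such that: (1) each member is generated by elements of $R_1$; (2) $0,R_+\in\mathbf F$; (3) for every $0\ne I\in\mathbf F$ there exist $J\in\mathbf F$, $J\ne I$, and $x\in R_1$ with $I=J+xR$ and $(J:x)=\{a\in R: xa\in J\}\in\mathbf F$. $R$ is initially Koszul with Groebner flag $(x_1,\dots,x_n)$ if the family $\{I_0,I_1,\dots,I_n\}$ is itself a Koszul filtration; equivalently, for each $1\le k\le n$ the right ideal $\{a\in R: x_ka\in I_{k-1}\}$ equals $I_j$ for some $j$. *)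

From HB Require Import structures.
From mathcomp Require Import all_boot all_order all_algebra.
From mathcomp Require Import finmap.
From mathcomp.multinomials Require Import monalg.

Set Implicit Arguments.
Unset Strict Implicit.
Unset Printing Implicit Defensive.

Import Order.TTheory GRing.Theory.
Local Open Scope ring_scope.

(* The free associative algebra F = k<x_1,...,x_n> : the monoid algebra over
   k of the free monoid {fmonom 'I_n} on the letters 'I_n = {0,...,n-1};
   the letter i : 'I_n stands for the variable x_(i+1). *)
Notation freealg k n := {malg k[{fmonom 'I_n}]}.

Section FreeAlgebra.
Variables (k : fieldType) (n : nat).
Local Notation F := (freealg k n).
Local Notation word := (seq 'I_n).

Definition mono (w : word) : F := << FMonom w >>.
Definition var (i : 'I_n) : F := mono [:: i].

Definition is_ideal (I : F -> Prop) : Prop :=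
  [/\ I 0,
      (forall a b, I a -> I b -> I (a + b)) &
      (forall a b c, I b -> I (a * b * c))].

Definition hcomp (d : nat) (f : F) : F :=
  \sum_(m <- msupp f | size (m : word) == d) << f@_m *g m >>.

Definition homogeneous_ideal (I : F -> Prop) : Prop :=
  forall f d, I f -> I (hcomp d f).

(* R = F/I is a standard algebra in which x_1,...,x_n is a basis of R_1:
   I is a homogeneous two-sided ideal contained in F_{>=2}. *)
Definition standard_ideal (I : F -> Prop) : Prop :=
  [/\ is_ideal I, homogeneous_ideal I &
      forall f, I f -> forall m, m \in msupp f -> (2 <= size (m : word))%N].

(* preimage in F of the right ideal x_1 R + ... + x_j R of R = F/I *)
Definition flag (I : F -> Prop) (j : nat) (f : F) : Prop :=
  exists g (c : 'I_n -> F),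
    I g /\ f = g + \sum_(i < n | (i < j)%N) var i * c i.

(* R = F/I is initially Koszul with Groebner flag (x_1,...,x_n): for each
   1 <= k <= n, (I_(k-1) : x_k) = I_j for some j.  (Here k-1 = i, x_k = var i;
   right ideals of R are compared through their preimages in F.) *)
Definition initially_koszul (I : F -> Prop) : Prop :=
  forall i : 'I_n, exists2 j, (j <= n)%N &
    forall a : F, flag I i (var i * a) <-> flag I j a.

Fixpoint lexlt (u v : word) : bool :=
  match u, v with
  | x :: u', y :: v' => ((x < y)%N || ((x == y) && lexlt u' v'))
  | _, _ => false
  end.

Definition deglt (u v : word) : bool :=
  (size u < size v)%N || ((size u == size v) && lexlt u v).

Definition lm (f : F) : word :=
  foldr (fun (m : {fmonom 'I_n}) (acc : word) =>
           if deglt acc m then (m : word) else acc) [::] (msupp f).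

Definition lc (f : F) : k := f@_(FMonom (lm f)).

Definition wdivides (u w : word) : Prop := exists a b, w = a ++ u ++ b.

Definition reduced_GB (I G : F -> Prop) : Prop :=
  [/\ forall g, G g -> I g,
      forall g, G g -> g != 0 /\ lc g = 1,
      forall f, I f -> f != 0 -> exists2 g, G g & wdivides (lm g) (lm f) &
      forall g g', G g -> G g' -> g <> g' ->
        forall m, m \in msupp g -> ~ wdivides (lm g') m].

Definition quadratic (g : F) : Prop :=
  forall m, m \in msupp g -> size (m : word) = 2%N.

Definition PBW_lm_condition (G : F -> Prop) : Prop :=
  (forall g, G g -> quadratic g) /\
  (forall a b c : 'I_n, (c < b)%N ->
     (exists2 g, G g & lm g = [:: a; b]) ->
     exists2 g, G g & lm g = [:: a; c]).

Definition ideal_gen (S : F -> Prop) (f : F) : Prop :=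
  exists l : seq (F * F * F),
    (forall t, t \in l -> S t.1.2) /\ f = \sum_(t <- l) t.1.1 * t.1.2 * t.2.

Definition lm_ideal (G : F -> Prop) : F -> Prop :=
  ideal_gen (fun f => exists2 g, G g & f = mono (lm g)).

End FreeAlgebra.

From HB Require Import structures.
From mathcomp Require Import all_boot all_order all_algebra.
From mathcomp Require Import finmap.
From mathcomp.multinomials Require Import monalg.
From mathcomp Require Import zify.
From Stdlib Require Import Classical.

Set Implicit Arguments.
Unset Strict Implicit.
Unset Printing Implicit Defensive.
Import Order.TTheory GRing.Theory.
Local Open Scope ring_scope.

(* Fix a letter [x_i].  If [G] is quadratic and [lm G] is closed downwards in
   the second letter, the colon ideal [(I_(i-1) : x_i)] is the flag ideal [I_j]
   spanned by the [x_c] with [x_i x_c] in [lm G]: these [x_c] lie in it because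
   rewriting [x_i x_c] by its Groebner element only produces smaller quadratic
   words, and nothing else does because a normal word [x_i w], with [w] starting
   with a letter [>= x_(j+1)], stays normal and so cannot lie in [I_(i-1)].
   Conversely, if [R] is initially Koszul, no nonzero element of [I] is supported
   on words avoiding the colon pairs [x_a x_b], [x_b] in [(I_(a-1) : x_a)]; so the
   leading monomial of each element of [G] is such a pair, which yields (ii).
   Finally [lm G] is the reduced Groebner basis of the monomial ideal [(lm G)],
   with the same leading monomials, so (iii) is (ii) for [R']. *)

Section Coefficients.
Variables (k : fieldType) (n : nat).
Local Notation F := (freealg k n).
Local Notation word := (seq 'I_n).
Local Notation coef f w := (mcoeff (FMonom w) f).

Lemma malg_coefP (f g : F) : (forall w, coef f w = coef g w) -> f = g.
Proof. by move=> H; apply/malgP => m; rewrite -[m]fmK H. Qed.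

Lemma sum_coef_eqU (s : seq {fmonom 'I_n}) (c : {fmonom 'I_n} -> k) x :
  uniq s -> \sum_(m <- s) c m *+ (m == x) = if x \in s then c x else 0.
Proof.
elim: s => [|m s IH] /=; first by rewrite big_nil.
case/andP=> ms us; rewrite big_cons IH // in_cons.
by case: (eqVneq m x) => [<-|_] /=; [rewrite (negPf ms) addr0|rewrite add0r].
Qed.

Lemma sum_msupp_coef (f : F) x : \sum_(m <- msupp f) f@_m *+ (m == x) = f@_x.
Proof.
by rewrite sum_coef_eqU ?fset_uniq //; case: ifP => // /negbT /mcoeff_outdom ->.
Qed.

Lemma coef_mono (u w : word) : coef (mono k u) w = (u == w)%:R.
Proof. by rewrite /mono mcoeffU1. Qed.

Lemma coef_mono_neq0 (u w : word) : coef (mono k u) w != 0 -> w = u.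
Proof. by rewrite coef_mono; case: (eqVneq u w) => [->|_] //; rewrite eqxx. Qed.

Lemma mono_neq0 (w : word) : mono k w != 0.
Proof.
apply: contra_neq (@oner_neq0 k) => w0.
by have := coef_mono w w; rewrite w0 mcoeff0 eqxx.
Qed.

Lemma mmul_fmonomE (m1 m2 : {fmonom 'I_n}) : mmul m1 m2 = FMonom (m1 ++ m2).
Proof. exact: fmmulE. Qed.

Lemma monoM (u v : word) : mono k u * mono k v = mono k (u ++ v).
Proof. by rewrite /mono malgM_def fgmulUU mulr1 mmul_fmonomE. Qed.

Lemma scale_malgU_mono (c : k) (m : {fmonom 'I_n}) : << c *g m >> = c *: mono k m.
Proof. by rewrite /mono fmK -mul_malgC malgM_def fgmulUU mulr1 mul1m. Qed.

Lemma mulr_malgC (x : F) (c : k) : x * c%:MP = c *: x.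
Proof.
rewrite malgM_def fgmulgU malgZ_def /fgscale; apply: eq_bigr => m _.
by rewrite mulm1 mulrC.
Qed.

Lemma scalerAr_malg (a : k) (x y : F) : a *: (x * y) = x * (a *: y).
Proof. by rewrite -[in RHS]mul_malgC mulrA mulr_malgC scalerAl. Qed.

Lemma coef_monoM (u : word) (f : F) w :
  coef (mono k u * f) w = \sum_(m <- msupp f) f@_m *+ (u ++ m == w).
Proof.
rewrite mcoeffMl /mono msuppU1 big_seq_fset1; apply: eq_bigr => m _.
by rewrite mcoeffUU mul1r mmul_fmonomE.
Qed.

Lemma coef_monoM_cat (u v : word) (f : F) :
  coef (mono k u * f) (u ++ v) = coef f v.
Proof.
rewrite coef_monoM -sum_msupp_coef; apply: eq_bigr => m _.
by rewrite eqseq_cat // eqxx; case: m.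
Qed.

Lemma coef_varM_nil (c : 'I_n) (f : F) : coef (var k c * f) [::] = 0.
Proof. by rewrite coef_monoM big1. Qed.

Lemma coef_varM_cons (c j : 'I_n) (f : F) w :
  coef (var k c * f) (j :: w) = if c == j then coef f w else 0.
Proof.
case: eqP => [<-|cj]; first exact: (coef_monoM_cat [:: c]).
by rewrite coef_monoM big1 // => m _ /=; rewrite eqseq_cons; case: eqP.
Qed.

Lemma coef_hcomp d (f : F) w :
  coef (hcomp d f) w = if size w == d then coef f w else 0.
Proof.
rewrite /hcomp raddf_sum /= big_mkcond /=.
rewrite (eq_bigr (fun m => (if size w == d then f@_m else 0) *+ (m == FMonom w))).
  rewrite sum_coef_eqU ?fset_uniq //.
  by case: (boolP (FMonom w \in msupp f)) => [//|/mcoeff_outdom ->]; case: ifP.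
move=> m _; rewrite mcoeffU; case: (eqVneq m (FMonom w)) => [->|_].
  by case: ifP.
by case: ifP => _; rewrite mulr0n.
Qed.

End Coefficients.

Section Supports.
Variables (k : fieldType) (n : nat).
Local Notation F := (freealg k n).
Local Notation word := (seq 'I_n).
Local Notation coef f w := (mcoeff (FMonom w) f).

Definition supp_in (P : word -> Prop) (f : F) := forall w, coef f w != 0 -> P w.

Lemma supp_in0 P : supp_in P 0.
Proof. by move=> w; rewrite mcoeff0 eqxx. Qed.

Lemma supp_inD P f g : supp_in P f -> supp_in P g -> supp_in P (f + g).
Proof.
move=> Hf Hg w; rewrite mcoeffD.
by case: (eqVneq (coef f w) 0) => [->|/Hf//]; rewrite add0r; apply: Hg.
Qed.

Lemma supp_inZ P c f : supp_in P f -> supp_in P (c *: f).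
Proof. by move=> Hf w; rewrite mcoeffZ mulf_eq0 negb_or => /andP[_ /Hf]. Qed.

Lemma supp_inN P f : supp_in P f -> supp_in P (- f).
Proof. by move=> Hf w; rewrite mcoeffN oppr_eq0 => /Hf. Qed.

Lemma supp_inB P f g : supp_in P f -> supp_in P g -> supp_in P (f - g).
Proof. by move=> Hf Hg; apply: supp_inD => //; apply: supp_inN. Qed.

Lemma supp_in_sum P (T : Type) (r : seq T) (Q : pred T) (Fi : T -> F) :
  (forall i, Q i -> supp_in P (Fi i)) -> supp_in P (\sum_(i <- r | Q i) Fi i).
Proof.
move=> H; apply: (big_rec (supp_in P)); first exact: supp_in0.
by move=> i x Qi Hx; apply: supp_inD => //; apply: H.
Qed.

Lemma supp_in_mono P w : P w -> supp_in P (mono k w).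
Proof. by move=> Pw v /coef_mono_neq0 ->. Qed.

Lemma supp_in_sub (P Q : word -> Prop) f :
  (forall w, P w -> Q w) -> supp_in P f -> supp_in Q f.
Proof. by move=> H Hf w /Hf /H. Qed.

Lemma supp_in_pred0 f : supp_in (fun _ => False) f -> f = 0.
Proof.
move=> H; apply: malg_coefP => w; rewrite mcoeff0.
by case: (eqVneq (coef f w) 0) => // /H.
Qed.

Lemma span_ind (P : word -> Prop) (Q : F -> Prop) :
  Q 0 -> (forall f g, Q f -> Q g -> Q (f + g)) ->
  (forall c f, Q f -> Q (c *: f)) -> (forall w, P w -> Q (mono k w)) ->
  forall f, supp_in P f -> Q f.
Proof.
move=> Q0 QD QZ Qm f Hf; rewrite (monalgE f) big_seq.
apply: (big_rec Q) => // m x mf Qx; apply: QD => //.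
rewrite scale_malgU_mono; apply/QZ/Qm/Hf.
by rewrite fmK mcoeff_neq0.
Qed.

Lemma coef_mulM_neq0 (a b c : F) w : coef (a * b * c) w != 0 ->
  exists x m y, [/\ w = x ++ m ++ y, coef a x != 0, coef b m != 0 & coef c y != 0].
Proof.
rewrite mcoeff_neq0 => /msuppM_le [m12 [m3 [/msuppM_le [m1 [m2 [m1a m2b ->]]] m3c e]]].
exists m1, m2, m3; rewrite !fmK !mcoeff_neq0; split => //.
by have := congr1 (@fmonom_val _) e; rewrite !mmul_fmonomE /= catA.
Qed.

Lemma supp_monoMmono (P : word -> Prop) (u v : word) (h : F) : supp_in P h ->
  supp_in (fun w => exists2 m, w = u ++ m ++ v & P m) (mono k u * h * mono k v).
Proof.
move=> Hh w /coef_mulM_neq0 [x [m [y [-> /coef_mono_neq0 -> /Hh Pm]]]].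
by move/coef_mono_neq0 ->; exists m.
Qed.

Lemma decomp_head (P : word -> Prop) (f : F) : supp_in P f ->
  exists d : 'I_n -> F, f = coef f [::] *: mono k [::] + \sum_(c < n) var k c * d c
    /\ forall c, supp_in (fun w => P (c :: w)) (d c).
Proof.
move: f; apply: span_ind.
- exists (fun _ => 0); split; last by move=> c; apply: supp_in0.
  by rewrite mcoeff0 scale0r add0r big1 // => c _; rewrite mulr0.
- move=> f g [d1 [e1 H1]] [d2 [e2 H2]]; exists (fun c => d1 c + d2 c); split.
    rewrite mcoeffD scalerDl [in LHS]e1 [in LHS]e2 addrACA; congr (_ + _).
    by rewrite -big_split /=; under [RHS]eq_bigr do rewrite mulrDr.
  by move=> c; apply: supp_inD.
- move=> a f [d [e H]]; exists (fun c => a *: d c); split.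
    rewrite mcoeffZ -scalerA [in LHS]e scalerDr scaler_sumr; congr (_ + _).
    by rewrite scaler_sumr; under [RHS]eq_bigr do rewrite -scalerAr_malg.
  by move=> c; apply: supp_inZ.
move=> w; case: w => [|c w] Pw.
  exists (fun _ => 0); split; last by move=> c; apply: supp_in0.
  by rewrite coef_mono eqxx scale1r big1 ?addr0 // => c _; rewrite mulr0.
exists (fun c' => if c' == c then mono k w else 0); split.
  rewrite coef_mono /= scale0r add0r (bigD1 c) //= eqxx big1 ?addr0.
    by rewrite monoM.
  by move=> c' /negPf ->; rewrite mulr0.
move=> c'; case: eqP => [->|_]; last exact: supp_in0.
by apply: supp_in_mono.
Qed.

End Supports.

Section Orders.
Variable (n : nat).
Local Open Scope nat_scope.
Local Notation word := (seq 'I_n).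

Lemma lexlt_irr (u : word) : lexlt u u = false.
Proof. by elim: u => //= x u ->; rewrite ltnn eqxx. Qed.

Lemma lexlt_trans (u v w : word) : lexlt u v -> lexlt v w -> lexlt u w.
Proof.
elim: u v w => [|x u IH] [|y v] [|z w] //=.
case/orP=> [xy|/andP[/eqP exy uv]]; case/orP=> [yz|/andP[/eqP eyz vw]].
- by rewrite (ltn_trans xy yz).
- by rewrite -eyz xy.
- by rewrite exy yz.
- by rewrite exy eyz eqxx (IH _ _ uv vw) orbT.
Qed.

Lemma lexlt_total (u v : word) : size u = size v -> u != v ->
  lexlt u v || lexlt v u.
Proof.
elim: u v => [|x u IH] [|y v] //= [] suv.
rewrite eqseq_cons; case: (ltngtP x y) => xy //=; first by rewrite orbT.
have exy : x = y by apply: val_inj.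
by rewrite exy eqxx /= => /(IH _ suv).
Qed.

Lemma lexlt_catr (a b v : word) : lexlt a b -> lexlt (a ++ v) (b ++ v).
Proof.
elim: a b => [|x a IH] [|y b] //=.
by case/orP=> [->//|/andP[-> /IH ->]]; rewrite orbT.
Qed.

Lemma lexlt_catl (u a b : word) : lexlt (u ++ a) (u ++ b) = lexlt a b.
Proof. by elim: u => //= x u ->; rewrite ltnn eqxx. Qed.

Lemma deglt_irr (u : word) : deglt u u = false.
Proof. by rewrite /deglt ltnn lexlt_irr andbF. Qed.

Lemma deglt_size (u v : word) : deglt u v -> size u <= size v.
Proof. by case/orP=> [/ltnW//|/andP[/eqP-> _]]. Qed.

Lemma deglt_trans (u v w : word) : deglt u v -> deglt v w -> deglt u w.
Proof.
rewrite /deglt; case/orP=> [uv|/andP[/eqP suv luv]];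
  case/orP=> [vw|/andP[/eqP svw lvw]].
- by rewrite (ltn_trans uv vw).
- by rewrite -svw uv.
- by rewrite suv vw.
- by rewrite suv svw eqxx (lexlt_trans luv lvw) orbT.
Qed.

Lemma deglt_asym (u v : word) : deglt u v -> deglt v u = false.
Proof.
move=> uv; apply/negP => vu; have := deglt_trans uv vu.
by rewrite deglt_irr.
Qed.

Lemma deglt_total (u v : word) : u != v -> deglt u v || deglt v u.
Proof.
move=> neq; rewrite /deglt; case: (ltngtP (size u) (size v)) => //= suv.
exact: lexlt_total.
Qed.

Lemma deglt_ctx (u m m' v : word) : deglt m m' -> deglt (u ++ m ++ v) (u ++ m' ++ v).
Proof.
rewrite /deglt !size_cat; case/orP=> [lt|/andP[/eqP e l]].
  by rewrite ltn_add2l ltn_add2r lt.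
by rewrite e eqxx lexlt_catl lexlt_catr // orbT.
Qed.

Lemma deglt_nil (u : word) : deglt u [::] = false.
Proof. by rewrite /deglt ltn0; case: u. Qed.

Lemma deglt_pair (a' b' a b : 'I_n) : deglt [:: a'; b'] [:: a; b] ->
  (a' < a)%N \/ (a' = a /\ (b' < b)%N).
Proof.
rewrite /deglt /= andbF orbF; case/orP=> [->|/andP[/eqP -> ->]]; first by left.
by right.
Qed.

Fixpoint enc (w : word) : nat :=
  match w with [::] => 0 | x :: u => x.+1 * n.+1 ^ size u + enc u end.

Lemma enc_lt (w : word) : (enc w < n.+1 ^ size w)%N.
Proof.
elim: w => //= x u IH; rewrite expnS.
have hx : (x.+1 <= n)%N by apply: ltn_ord.
have hx' : x.+2 <= n.+1 by [].
have := leq_mul hx' (leqnn (n.+1 ^ size u)).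
rewrite mulSn; lia.
Qed.

Lemma enc_ge (x : 'I_n) (u : word) : (n.+1 ^ size u <= enc (x :: u))%N.
Proof. rewrite /=; have := leq_mul (ltn0Sn x) (leqnn (n.+1 ^ size u)); lia. Qed.

Lemma lexlt_enc (u v : word) : size u = size v -> lexlt u v -> (enc u < enc v)%N.
Proof.
elim: u v => [|x u IH] [|y v] //= [] s; rewrite s.
case/orP=> [xy|/andP[/eqP -> uv]]; last by rewrite ltn_add2l IH.
have h1 := enc_lt u; rewrite s in h1.
have h2 : x.+2 <= y.+1 by [].
have := leq_mul h2 (leqnn (n.+1 ^ size v)).
rewrite mulSn; lia.
Qed.

Lemma deglt_enc (u v : word) : deglt u v -> (enc u < enc v)%N.
Proof.
case/orP=> [suv|/andP[/eqP s l]]; last exact: lexlt_enc.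
case: v suv => [|y v] suv; first by rewrite ltn0 in suv.
apply: (leq_trans (enc_lt u)); apply: leq_trans (enc_ge y v).
exact: leq_pexp2l.
Qed.

Lemma deglt_ind (P : word -> Prop) :
  (forall w, (forall u, deglt u w -> P u) -> P w) -> forall w, P w.
Proof.
move=> H w; have [N] := ubnP (enc w); elim: N w => // N IH w lt.
apply: H => u /deglt_enc uw; apply: IH; exact: leq_trans uw _.
Qed.

Lemma wdivides_size (u w : word) : wdivides u w -> (size u <= size w)%N.
Proof. by case=> a [b ->]; rewrite !size_cat; lia. Qed.

Lemma wdivides_eq (u w : word) : wdivides u w -> (size w <= size u)%N -> u = w.
Proof.
case=> a [b ->]; rewrite !size_cat => h.
have /eqP: size a = 0%N by lia.
have /eqP: size b = 0%N by lia.
by rewrite !size_eq0 => /eqP-> /eqP->; rewrite cats0.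
Qed.

Lemma wdivides_trans (u v w : word) : wdivides u v -> wdivides v w -> wdivides u w.
Proof.
case=> a [b ->] [c [d ->]]; exists (c ++ a), (b ++ d).
by rewrite !catA.
Qed.

Lemma wdivides_refl (u : word) : wdivides u u.
Proof. by exists [::], [::]; rewrite cats0. Qed.

End Orders.

Section LM.
Variables (k : fieldType) (n : nat).
Local Notation F := (freealg k n).
Local Notation word := (seq 'I_n).
Local Notation coef f w := (mcoeff (FMonom w) f).

Lemma lm_fold (s : seq {fmonom 'I_n}) :
  let acc := foldr (fun (m : {fmonom 'I_n}) (acc : word) =>
           if deglt acc m then (m : word) else acc) [::] s in
  ((acc == [::]) || (acc \in map (fun m : {fmonom 'I_n} => (m : word)) s)) /\
  forall m, m \in s -> ((m : word) = acc \/ deglt m acc).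
Proof.
elim: s => [|m s [IH1 IH2]] /=; first by split.
set acc := foldr _ _ s in IH1 IH2 *.
case: ifP => [lt|nlt].
  split; first by rewrite in_cons eqxx orbT.
  move=> m'; rewrite in_cons => /orP[/eqP->|/IH2 [e|lt']]; first by left.
    by right; rewrite e.
  by right; apply: deglt_trans lt.
split.
  case/orP: IH1 => [->//|H]; by rewrite in_cons H !orbT.
move=> m'; rewrite in_cons => /orP[/eqP->|/IH2 //].
case: (eqVneq (m : word) acc) => [->|ne]; first by left.
by have := deglt_total ne; rewrite nlt orbF => ->; right.
Qed.

Lemma lm_maxP (f : F) w : coef f w != 0 -> w = lm f \/ deglt w (lm f).
Proof.
rewrite mcoeff_neq0 => H; have [_ H2] := lm_fold (msupp f).
exact: (H2 _ H).
Qed.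

Lemma coef_lm_neq0 (f : F) : f != 0 -> coef f (lm f) != 0.
Proof.
move=> f0; have [H1 H2] := lm_fold (msupp f); rewrite -/(lm f) in H1 H2.
have [m mf] : exists m, m \in msupp f.
  by apply/fset0Pn; rewrite msupp_eq0.
case/orP: H1 => [/eqP e|/mapP [m' m'f ->]]; last by rewrite fmK mcoeff_neq0.
case: (H2 _ mf) => [em|]; last by rewrite e deglt_nil.
by rewrite -em fmK mcoeff_neq0.
Qed.

Lemma lm_eq (f : F) w : coef f w != 0 ->
  (forall w', coef f w' != 0 -> w' = w \/ deglt w' w) -> lm f = w.
Proof.
move=> fw H.
have f0 : f != 0 by apply: contraNneq fw => ->; rewrite mcoeff0.
case: (lm_maxP fw) => [->//|lt].
case: (H _ (coef_lm_neq0 f0)) => [//|lt'].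
by rewrite (deglt_asym lt) in lt'.
Qed.

Lemma lm_mono (w : word) : lm (mono k w) = w.
Proof.
apply: lm_eq; first by rewrite coef_mono eqxx oner_neq0.
by move=> w'; rewrite coef_mono; case: (eqVneq w w') => [->|_]; [left|rewrite eqxx].
Qed.

Lemma lm_lower (f : F) m : coef f m != 0 -> m != lm f -> deglt m (lm f).
Proof. by move=> /lm_maxP [->|//]; rewrite eqxx. Qed.

Lemma lm_supp_size (f : F) w : coef f w != 0 -> (size w <= size (lm f))%N.
Proof. by case/lm_maxP => [->//|/deglt_size]. Qed.

End LM.

Section Ideals.
Variables (k : fieldType) (n : nat).
Local Notation F := (freealg k n).
Variable I : F -> Prop.
Hypothesis idI : is_ideal I.

Lemma ideal0 : I 0. Proof. by case: idI. Qed.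

Lemma idealD f g : I f -> I g -> I (f + g).
Proof. by case: idI => _ + _; apply. Qed.

Lemma idealM a b c : I b -> I (a * b * c).
Proof. by case: idI => _ _; apply. Qed.

Lemma idealMl a b : I b -> I (a * b).
Proof. by move=> Ib; rewrite -[a * b]mulr1; apply: idealM. Qed.

Lemma idealMr b c : I b -> I (b * c).
Proof. by move=> Ib; rewrite -[b * c]mul1r mulrA; apply: idealM. Qed.

Lemma idealZ c f : I f -> I (c *: f).
Proof. by move=> If; rewrite -mul_malgC; apply: idealMl. Qed.

Lemma idealB f g : I f -> I g -> I (f - g).
Proof. by move=> If Ig; rewrite -scaleN1r; apply/idealD/idealZ. Qed.

Lemma flag_ideal {j} g : I g -> flag I j g.
Proof.
move=> Ig; exists g, (fun _ => 0); split => //.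
by rewrite big1 ?addr0 // => i _; rewrite mulr0.
Qed.

Lemma flag_varM j (c : 'I_n) d : (c < j)%N -> flag I j (var k c * d).
Proof.
move=> cj; exists 0, (fun i => if i == c then d else 0); split; first exact: ideal0.
rewrite add0r (bigD1 c) //= eqxx big1 ?addr0 // => i /andP[_ /negPf ->].
by rewrite mulr0.
Qed.

Lemma flag0 j : flag I j 0.
Proof. exact/flag_ideal/ideal0. Qed.

Lemma flagD j f g : flag I j f -> flag I j g -> flag I j (f + g).
Proof.
case=> [g1 [c1 [I1 ->]]] [g2 [c2 [I2 ->]]].
exists (g1 + g2), (fun i => c1 i + c2 i); split; first exact: idealD.
rewrite -!addrA; congr (_ + _); rewrite addrCA -big_split /=; congr (_ + _).
by apply: eq_bigr => i _; rewrite mulrDr.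
Qed.

Lemma flagZ j a f : flag I j f -> flag I j (a *: f).
Proof.
case=> [g [c [Ig ->]]]; exists (a *: g), (fun i => a *: c i); split.
  exact: idealZ.
rewrite scalerDr scaler_sumr; congr (_ + _); apply: eq_bigr => i _.
by rewrite scalerAr_malg.
Qed.

Lemma flagB j f g : flag I j f -> flag I j g -> flag I j (f - g).
Proof. by move=> Hf Hg; rewrite -scaleN1r; apply/flagD/flagZ. Qed.

Lemma flag_sum j (T : Type) (r : seq T) (P : pred T) (Fi : T -> F) :
  (forall i, P i -> flag I j (Fi i)) -> flag I j (\sum_(i <- r | P i) Fi i).
Proof.
move=> H; apply: (big_rec (flag I j)); first exact: flag0.
by move=> i x Pi Hx; apply: flagD => //; apply: H.
Qed.

Lemma flag_sum_varM j (c : 'I_n -> F) :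
  flag I j (\sum_(i < n | (i < j)%N) var k i * c i).
Proof. by apply: flag_sum => i ij; apply: flag_varM. Qed.

Lemma flag_le j j' f : (j <= j')%N -> flag I j f -> flag I j' f.
Proof.
move=> jj' [g [c [Ig ->]]]; apply: flagD; first exact: flag_ideal.
by apply: flag_sum => i ij; apply: flag_varM; apply: leq_trans ij jj'.
Qed.

Lemma flagMr j f d : flag I j f -> flag I j (f * d).
Proof.
case=> [g [c [Ig ->]]]; rewrite mulrDl mulr_suml; apply: flagD.
  exact/flag_ideal/idealMr.
by apply: flag_sum => i ij; rewrite -mulrA; apply: flag_varM.
Qed.

End Ideals.

Section GroebnerBasis.
Variables (k : fieldType) (n : nat).
Local Notation F := (freealg k n).
Local Notation word := (seq 'I_n).
Local Notation coef f w := (mcoeff (FMonom w) f).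
Variables (I G : F -> Prop).
Hypothesis hI : standard_ideal I.
Hypothesis hG : reduced_GB I G.

Lemma standard_is_ideal : is_ideal I.
Proof. by case: hI. Qed.

Local Notation idI := standard_is_ideal.

Lemma standard_size g w : I g -> coef g w != 0 -> (2 <= size w)%N.
Proof. by case: hI => _ _ H Ig; rewrite mcoeff_neq0 => /(H _ Ig). Qed.

Lemma standard_coef_small g w : I g -> (size w < 2)%N -> coef g w = 0.
Proof.
move=> Ig sw; apply: contraTeq sw => /(standard_size Ig).
by rewrite leqNgt => /negPf ->.
Qed.

Lemma flag_coef_nil j f : flag I j f -> coef f [::] = 0.
Proof.
case=> [g [c [Ig ->]]]; rewrite mcoeffD raddf_sum /= standard_coef_small // add0r.
by rewrite big1 // => i _; rewrite coef_varM_nil.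
Qed.

Lemma flag_var_lt j (b : 'I_n) : flag I j (var k b) -> (b < j)%N.
Proof.
case=> [g [c [Ig e]]]; have := congr1 (mcoeff (FMonom [:: b])) e.
rewrite coef_mono eqxx mcoeffD raddf_sum /= standard_coef_small // add0r.
case: (ltnP b j) => // jb; rewrite big1 => [/eqP|i ij]; first by rewrite oner_eq0.
by rewrite coef_varM_cons; case: eqP => // eib; move: ij; rewrite eib ltnNge jb.
Qed.

Lemma G_ideal g : G g -> I g. Proof. by case: hG => H _ _ _; apply: H. Qed.
Lemma G_neq0 g : G g -> g != 0. Proof. by case: hG => _ H _ _ /H []. Qed.
Lemma G_lc g : G g -> coef g (lm g) = 1. Proof. by case: hG => _ H _ _ /H []. Qed.

Lemma G_coef_lm_neq0 g : G g -> coef g (lm g) != 0.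
Proof. by move=> Gg; rewrite G_lc ?oner_neq0. Qed.

Lemma G_size_lm g : G g -> (2 <= size (lm g))%N.
Proof. by move=> Gg; apply: (standard_size (G_ideal Gg)); apply: G_coef_lm_neq0. Qed.

Lemma G_reduced g g' m : G g -> G g' -> g <> g' -> coef g m != 0 ->
  ~ wdivides (lm g') m.
Proof. by case: hG => _ _ _ H Gg Gg' ne; rewrite mcoeff_neq0 => /(H _ _ Gg Gg' ne). Qed.

Lemma supp_G_tail g : G g ->
  supp_in (fun m => coef g m != 0 /\ m != lm g) (g - mono k (lm g)).
Proof.
move=> Gg w; rewrite mcoeffB coef_mono.
case: (eqVneq (lm g) w) => [<-|ne]; first by rewrite G_lc // subrr eqxx.
by rewrite subr0 => ->; split => //; rewrite eq_sym.
Qed.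

Definition normal (w : word) := forall g, G g -> ~ wdivides (lm g) w.

Lemma G_lower_normal g m : G g -> coef g m != 0 -> m != lm g -> normal m.
Proof.
move=> Gg gm ne g' Gg' dv; have [eg|ne'] := classic (g = g'); last first.
  exact: (G_reduced Gg Gg' ne' gm dv).
rewrite -eg in dv; have lt := lm_lower gm ne.
by move: ne; rewrite (wdivides_eq dv (deglt_size lt)) eqxx.
Qed.

Lemma not_normal w : ~ normal w -> exists2 g, G g & exists u v, w = u ++ lm g ++ v.
Proof.
move=> H; apply: NNPP => H'; apply: H => g Gg [u [v e]]; apply: H'.
by exists g => //; exists u, v.
Qed.

Lemma normal_eq0 f : I f -> supp_in normal f -> f = 0.
Proof.
move=> If Hf; apply/eqP/negP => /negP f0.
case: hG => _ _ H _; have [g Gg dv] := H f If f0.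
exact: (Hf _ (coef_lm_neq0 f0) g Gg).
Qed.

Definition normal_form_in (P : word -> Prop) (f : F) :=
  exists2 r, supp_in (fun w => P w /\ normal w) r & I (f - r).

Lemma normal_form_span (P Q : word -> Prop) :
  (forall w, Q w -> normal_form_in P (mono k w)) ->
  forall f, supp_in Q f -> normal_form_in P f.
Proof.
move=> HQ; apply: span_ind => //.
- by exists 0; [apply: supp_in0|rewrite subr0; apply: ideal0 idI].
- move=> f g [r1 H1 I1] [r2 H2 I2]; exists (r1 + r2); first exact: supp_inD.
  by rewrite opprD addrACA; apply: (idealD idI).
- move=> c f [r H1 I1]; exists (c *: r); first exact: supp_inZ.
  by rewrite -scalerBr; apply: (idealZ idI).
Qed.

Lemma normal_form (P : word -> Prop) :
  (forall g u v m, G g -> P (u ++ lm g ++ v) -> coef g m != 0 -> m != lm g ->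
     P (u ++ m ++ v)) ->
  forall f, supp_in P f -> normal_form_in P f.
Proof.
move=> Pcl; apply: normal_form_span; elim/deglt_ind => w IH Pw.
have [nw|/not_normal [g Gg [u [v ew]]]] := classic (normal w).
  by exists (mono k w); [apply: supp_in_mono|rewrite subrr; apply: ideal0 idI].
have [r Hr Ir] : normal_form_in P (mono k u * (g - mono k (lm g)) * mono k v).
  apply: (normal_form_span _ (supp_monoMmono (u := u) (v := v) (supp_G_tail Gg))).
  move=> _ [m -> [gm ne]]; apply: IH; last by apply: (Pcl g); rewrite -?ew.
  by rewrite ew; apply/deglt_ctx/lm_lower.
exists (- r); first exact: supp_inN.
have -> : mono k w - - r =
    mono k u * g * mono k v - (mono k u * (g - mono k (lm g)) * mono k v - r).
  rewrite mulrBr mulrBl !monoM -catA -ew; set a := _ * g * _.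
  by rewrite opprB opprB addrA addrC opprK addrA subrK.
by apply: (idealB idI) => //; apply/(idealM idI)/G_ideal.
Qed.

Lemma normal_form_exists f : exists2 r, supp_in normal r & I (f - r).
Proof.
have [r Hr Ir] :=
  @normal_form (fun _ => True) (fun _ _ _ _ _ _ _ _ => Logic.I) f (fun _ _ => Logic.I).
by exists r => // w /Hr [].
Qed.

End GroebnerBasis.

Section Heads.
Variables (k : fieldType) (n : nat).
Local Notation F := (freealg k n).
Local Notation word := (seq 'I_n).
Local Notation coef f w := (mcoeff (FMonom w) f).

Definition head_lt (j : nat) (w : word) := if w is c :: _ then (c < j)%N else false.
Definition head_ge (j : nat) (w : word) := if w is c :: _ then (j <= c)%N else true.

Lemma supp_sum_varM_head_lt j (d : 'I_n -> F) :
  supp_in (head_lt j) (\sum_(c < n | (c < j)%N) var k c * d c).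
Proof.
apply: supp_in_sum => c cj [|c' w]; first by rewrite coef_varM_nil eqxx.
by rewrite coef_varM_cons; case: (eqVneq c c') => [<-|_] //; rewrite eqxx.
Qed.

Lemma coef_sum_varM_head_ge j (d : 'I_n -> F) (c : 'I_n) w : (j <= c)%N ->
  coef (\sum_(i < n | (i < j)%N) var k i * d i) (c :: w) = 0.
Proof.
move=> jc; apply/eqP; apply: contraTT jc => /(supp_sum_varM_head_lt (j := j)) /=.
by rewrite -ltnNge.
Qed.

Lemma split_head (P : word -> Prop) j (f : F) : supp_in P f ->
  exists f1 (d : 'I_n -> F), f = f1 + \sum_(c < n | (c < j)%N) var k c * d c
    /\ supp_in (fun w => P w /\ head_ge j w) f1.
Proof.
move=> Hf; have [d [ef Hd]] := decomp_head Hf.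
exists (coef f [::] *: mono k [::] + \sum_(c < n | ~~ (c < j)%N) var k c * d c), d.
split; first by rewrite {1}ef (bigID (fun c : 'I_n => (c < j)%N)) /= addrAC addrA.
apply: supp_inD.
  have [->|/Hf P0] := eqVneq (coef f [::]) 0; first by rewrite scale0r; apply: supp_in0.
  by apply: supp_inZ; apply: supp_in_mono.
apply: supp_in_sum => c; rewrite -leqNgt => jc [|c' w].
  by rewrite coef_varM_nil eqxx.
by rewrite coef_varM_cons; case: (eqVneq c c') => [<- /(Hd c)|_] //; rewrite eqxx.
Qed.

End Heads.

Definition lm_pair (k : fieldType) (n : nat) (G : freealg k n -> Prop) (a b : 'I_n) :=
  exists2 g, G g & lm g = [:: a; b].

Lemma initial_segment (n : nat) (P : 'I_n -> Prop) :
  (forall b c : 'I_n, (c < b)%N -> P b -> P c) ->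
  exists2 j, (j <= n)%N & forall c : 'I_n, P c <-> (c < j)%N.
Proof.
move=> Pdown.
suff H s t : (t + s = n)%N -> (forall c : 'I_n, (c < t)%N -> P c) ->
    exists2 j, (j <= n)%N & forall c : 'I_n, P c <-> (c < j)%N.
  by apply: (H n 0) => // c; rewrite ltn0.
elim: s t => [|s IH] t ets Pt.
  by exists n => // c; split => // _; apply: Pt; rewrite -[t]addn0 ets.
have tn : (t < n)%N by rewrite -ets addnS ltnS leq_addr.
have [Ptn|nPtn] := classic (P (Ordinal tn)).
  apply: (IH t.+1); first by rewrite addSnnS.
  move=> c; rewrite ltnS leq_eqVlt => /orP[/eqP ct|]; last exact: Pt.
  by rewrite (_ : c = Ordinal tn) //; apply: val_inj.
exists t; first exact: ltnW.
move=> c; split; last exact: Pt.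
move=> Pc; case: (ltnP c t) => // tc; exfalso; apply: nPtn.
move: tc; rewrite leq_eqVlt => /orP[/eqP tc|tc].
  by rewrite (_ : Ordinal tn = c) //; apply: val_inj.
exact: (Pdown c (Ordinal tn) tc Pc).
Qed.

Lemma size2_pair (T : Type) (m : seq T) : size m = 2%N -> exists a b, m = [:: a; b].
Proof. by case: m => [|a [|b []]] //; exists a, b. Qed.

Section PBWKoszul.
Variables (k : fieldType) (n : nat).
Local Notation F := (freealg k n).
Local Notation coef f w := (mcoeff (FMonom w) f).
Variables (I G : F -> Prop).
Hypothesis hI : standard_ideal I.
Hypothesis hG : reduced_GB I G.
Hypothesis hP : PBW_lm_condition G.
Local Notation idI := (standard_is_ideal hI).

Lemma G_quadratic g m : G g -> coef g m != 0 -> size m = 2%N.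
Proof. by case: hP => H _ Gg; rewrite mcoeff_neq0 => /(H _ Gg). Qed.

Lemma G_lm_pair g : G g -> exists a b, lm g = [:: a; b].
Proof. by move=> Gg; apply/size2_pair/(G_quadratic Gg)/(G_coef_lm_neq0 hG). Qed.

Lemma lm_pair_down (i b c : 'I_n) : (c < b)%N -> lm_pair G i b -> lm_pair G i c.
Proof. by case: hP => _ H cb [g Gg e]; apply: (H i b c cb); exists g. Qed.

(* Rewriting [x_i x_c] by its Groebner element leaves words [x_a' x_b'] with
   [a' < i], which lie in [I_(i-1)], or [a' = i, b' < c], handled by induction. *)
Lemma flag_lm_pair (i c : 'I_n) : lm_pair G i c -> flag I i (var k i * var k c).
Proof.
have [N] := ubnP c; elim: N c => // N IH c cN Lic; have [g Gg e] := Lic.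
rewrite monoM /= -e.
have -> : mono k (lm g) = g - (g - mono k (lm g)) by rewrite opprB addrC subrK.
apply: (flagB idI); first exact/flag_ideal/(G_ideal hG).
move: (supp_G_tail hG Gg); apply: span_ind => [|f1 f2|a f|m [gm ne]].
- exact: (flag0 idI).
- exact: (flagD idI).
- exact: (flagZ idI).
have [a' [b' em]] := size2_pair (G_quadratic Gg gm).
have := lm_lower gm ne; rewrite em e -cat1s -monoM => /deglt_pair [ai|[-> bc]].
  exact: (flag_varM idI).
apply: IH; last exact: lm_pair_down bc Lic.
by rewrite -ltnS; apply: leq_trans cN.
Qed.

Lemma head_lt_reduce (i : nat) g u v m : G g -> head_lt i (u ++ lm g ++ v) ->
  coef g m != 0 -> m != lm g -> head_lt i (u ++ m ++ v).
Proof.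
move=> Gg hl gm ne; case: u hl => [|x u] //=.
have [a [b el]] := G_lm_pair Gg; have [a' [b' em]] := size2_pair (G_quadratic Gg gm).
have lt := lm_lower gm ne; rewrite el em in lt; rewrite el em /=.
by case/deglt_pair: lt => [aa|[-> _]] // ai; apply: ltn_trans aa ai.
Qed.

Section ColonIdeal.
Variables (i : 'I_n) (j : nat).
Hypothesis hj : forall c : 'I_n, lm_pair G i c <-> (c < j)%N.

Lemma flag_sub_colon a : flag I j a -> flag I i (var k i * a).
Proof.
case=> [g [c [Ig ->]]]; rewrite mulrDr mulr_sumr; apply: (flagD idI).
  exact/flag_ideal/(idealMl idI).
apply: (flag_sum idI) => c' c'j; rewrite mulrA; apply: (flagMr idI).
exact/flag_lm_pair/hj.
Qed.

Lemma normal_cons w : normal G w -> head_ge j w -> normal G (i :: w).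
Proof.
move=> nw hw g Gg [x [y e]]; have [a [b el]] := G_lm_pair Gg; rewrite el in e.
case: x e => [|x0 x] /= [] ea ew.
  have : lm_pair G i b by exists g; rewrite // el ea.
  by move/hj; rewrite ew /= in hw; rewrite ltnNge hw.
by apply: (nw g Gg); exists x, y; rewrite el.
Qed.

(* [x_i f] is normal, while modulo [I] it is congruent to a normal combination
   of words starting with letters below [x_i]. *)
Lemma colon_normal_eq0 f : supp_in (fun w => normal G w /\ head_ge j w) f ->
  flag I i (var k i * f) -> f = 0.
Proof.
move=> Hf [g0 [d [Ig0 e]]].
have [r Hr Ir] :=
  normal_form hI hG (@head_lt_reduce i) (supp_sum_varM_head_lt (j := i) (d := d)).
have supp_normal : supp_in (normal G) (var k i * f - r).
  apply: supp_inB; last by move=> w /Hr [].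
  case=> [|c w]; first by rewrite coef_varM_nil eqxx.
  rewrite coef_varM_cons; case: (eqVneq i c) => [<- /Hf [nw hw]|_].
    exact: normal_cons.
  by rewrite eqxx.
have h0 : var k i * f - r = 0.
  by apply: (normal_eq0 hG) supp_normal; rewrite e -addrA; apply: (idealD idI).
apply: malg_coefP => w; rewrite mcoeff0.
have := congr1 (mcoeff (FMonom (i :: w))) h0.
rewrite mcoeffB coef_varM_cons eqxx mcoeff0.
have [->|/Hr [] /=] := eqVneq (coef r (i :: w)) 0; first by rewrite subr0.
by rewrite ltnn.
Qed.

Lemma colon_sub_flag a : flag I i (var k i * a) -> flag I j a.
Proof.
move=> Ha; have [r Hr Ir] := normal_form_exists hI hG a.
have [f1 [d [er Hf1]]] := split_head j Hr.
pose S := \sum_(c < n | (c < j)%N) var k c * d c.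
have f10 : f1 = 0.
  apply: colon_normal_eq0 Hf1 _.
  have -> : f1 = a - (a - r) - S by rewrite er opprB addrCA subrr addr0 addrK.
  rewrite mulrBr; apply: (flagB idI).
    rewrite mulrBr; apply: (flagB idI Ha).
    exact/flag_ideal/(idealMl idI).
  rewrite mulr_sumr; apply: (flag_sum idI) => c cj; rewrite mulrA.
  exact/(flagMr idI)/flag_lm_pair/hj.
have -> : a = (a - r) + S by rewrite er f10 add0r subrK.
exact/(flagD idI)/(flag_sum_varM idI)/flag_ideal.
Qed.

End ColonIdeal.

Theorem PBW_initially_koszul : initially_koszul I.
Proof.
move=> i; have [j jn hj] := initial_segment (@lm_pair_down i); exists j => // a.
by split; [apply: colon_sub_flag | apply: flag_sub_colon].
Qed.

End PBWKoszul.

Section KoszulPBW.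
Variables (k : fieldType) (n : nat).
Local Notation F := (freealg k n).
Local Notation word := (seq 'I_n).
Local Notation coef f w := (mcoeff (FMonom w) f).
Variables (I G : F -> Prop).
Hypothesis hI : standard_ideal I.
Hypothesis hG : reduced_GB I G.
Hypothesis hK : initially_koszul I.
Local Notation idI := (standard_is_ideal hI).

(* [x_b] lies in the colon ideal [(I_(a-1) : x_a)] (letters are 0-based). *)
Definition colon_pair (a b : 'I_n) := flag I a (var k a * var k b).

Definition colon_free (w : word) :=
  forall x y a b, w = x ++ [:: a; b] ++ y -> ~ colon_pair a b.

Lemma colon_pairP (i : 'I_n) j : (forall a, flag I i (var k i * a) <-> flag I j a) ->
  forall b : 'I_n, colon_pair i b <-> (b < j)%N.
Proof.
move=> hj b; rewrite /colon_pair hj; split; first exact: (flag_var_lt hI).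
by move=> bj; rewrite -[var k b]mulr1; apply: (flag_varM idI).
Qed.

(* The largest [c] with [d c != 0] would give [x_c d_c] in [I_(c-1)]. *)
Lemma sum_varM_eq0 m (d : 'I_n -> F) :
  flag I m (\sum_(c < n) var k c * d c) ->
  (forall c : 'I_n, (c < m)%N -> d c = 0) ->
  (forall c : 'I_n, flag I c (var k c * d c) -> d c = 0) ->
  forall c, d c = 0.
Proof.
move=> Hm Hlt Hc.
suff H s (c : 'I_n) : (n - s <= c)%N -> d c = 0.
  by move=> c; apply: (H n); rewrite subnn.
elim: s c => [|s IH] c cs; first by have := ltn_ord c; rewrite subn0 in cs; lia.
case: (leqP (n - s) c) => cs'; first exact: IH.
case: (ltnP c m) => cm; first exact: Hlt.
apply: Hc; rewrite (bigD1 c) //= in Hm.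
rewrite -[var k c * d c](addrK (\sum_(i < n | i != c) var k i * d i)).
apply: (flagB idI); first exact: (flag_le idI cm Hm).
apply: (flag_sum idI) => i ic; case: (ltnP i c) => [lt|ge].
  exact: (flag_varM idI).
rewrite IH ?mulr0; first exact: (flag0 idI).
have lt : (c < i)%N by rewrite ltn_neqAle eq_sym ic ge.
by move: lt cs cs'; clear; lia.
Qed.

(* Induction on the degree: in [h = \sum_c x_c d_c] each nonzero [d_c] lies in
   [(I_(c-1) : x_c) = I_j], and is again colon-free with heads [>= j]. *)
Lemma colon_free_flag_eq0 L : forall m (h : F),
  supp_in (fun w => [/\ colon_free w, (size w <= L)%N & head_ge m w]) h ->
  flag I m h -> h = 0.
Proof.
elim: L => [|L IHL] m h Hh Hf; have [d [eh Hd]] := decomp_head Hh;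
  rewrite (flag_coef_nil hI Hf) scale0r add0r in eh; rewrite eh in Hf *.
  rewrite big1 // => c _; rewrite (supp_in_pred0 (supp_in_sub _ (Hd c))) ?mulr0 //.
  by move=> w [].
suff d0 c : d c = 0 by rewrite big1 // => c' _; rewrite d0 mulr0.
move: c; apply: (sum_varM_eq0 Hf).
  move=> c cm; apply: supp_in_pred0; apply: supp_in_sub (Hd c) => w [_ _ /=].
  by rewrite leqNgt cm.
move=> c Hc; have [j _ hj] := hK c.
apply: (IHL j _ _ (proj1 (hj _) Hc)) => w /(Hd c) [Nw sw _]; split => //.
  by move=> x y a b ew; apply: (Nw (c :: x) y a b); rewrite ew.
case: w Nw {sw} => [|b y] Nw //=; rewrite leqNgt; apply/negP => bj.
by apply: (Nw [::] y c b (erefl _)); apply/(colon_pairP hj).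
Qed.

Lemma colon_free_eq0 h : I h -> supp_in colon_free h -> h = 0.
Proof.
move=> Ih Hh; apply: (@colon_free_flag_eq0 (\max_(m <- msupp h) size (m : word)) 0).
  move=> w hw; split; [exact: Hh| |by case: w {hw}].
  rewrite mcoeff_neq0 in hw.
  exact: (@leq_bigmax_seq _ (msupp h : seq _) xpredT
    (fun m : {fmonom 'I_n} => size (m : word)) (FMonom w) hw).
exact: flag_ideal.
Qed.

(* The quadratic part of the witness of [colon_pair a b] lies in [I] and has
   leading monomial [x_a x_b], since the correction terms start with [x_c], [c < a]. *)
Lemma colon_pair_lm (a b : 'I_n) : colon_pair a b -> lm_pair G a b.
Proof.
case=> [g0 [d [Ig0 e]]]; set S := \sum_(_ < _ | _) _ in e.
pose q := hcomp 2 g0.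
have Iq : I q by case: hI => _ + _; apply.
have coef_q w : coef q w =
    if size w == 2%N then coef (mono k [:: a; b]) w - coef S w else 0.
  rewrite coef_hcomp; case: ifP => // _.
  have -> : g0 = var k a * var k b - S by rewrite e addrK.
  by rewrite mcoeffB monoM.
have qab : coef q [:: a; b] != 0.
  by rewrite coef_q /= coef_mono eqxx coef_sum_varM_head_ge // subr0 oner_neq0.
have lm_q : lm q = [:: a; b].
  apply: lm_eq => // w; rewrite coef_q.
  case: ifP => [/eqP/size2_pair [x [y ->]]|]; last by rewrite eqxx.
  case: (ltnP x a) => xa; first by right; rewrite /deglt /= xa.
  by rewrite coef_sum_varM_head_ge // subr0 => /coef_mono_neq0 ->; left.
have [g Gg dv] : exists2 g, G g & wdivides (lm g) (lm q).
  by case: hG => _ _ H _; apply: H => //; apply: contraNneq qab => ->; rewrite mcoeff0.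
exists g => //; rewrite lm_q in dv; apply: wdivides_eq dv _.
exact: (G_size_lm hI hG).
Qed.

Lemma normal_colon_free w : normal G w -> colon_free w.
Proof.
move=> nw x y a b ew /colon_pair_lm [g Gg el]; apply: (nw g Gg).
by exists x, y; rewrite el.
Qed.

(* Some colon pair occurs in [lm g], since otherwise [g] would be supported on
   colon-free words; reducedness then forces [lm g] to be that pair. *)
Lemma G_lm_colon_pair g : G g -> exists a b, lm g = [:: a; b] /\ colon_pair a b.
Proof.
move=> Gg; have [free_lm|not_free] := classic (colon_free (lm g)).
  exfalso; apply/negP: (G_neq0 hG Gg); apply/negPn/eqP/colon_free_eq0.
    exact: (G_ideal hG).
  move=> w gw; have [->|ne] := eqVneq w (lm g); first exact: free_lm.
  exact/normal_colon_free/(G_lower_normal hG Gg gw).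
have [x [y [a [b [el Qab]]]]] :
    exists x y a b, lm g = x ++ [:: a; b] ++ y /\ colon_pair a b.
  apply: NNPP => H; apply: not_free => x y a b el Qab; apply: H.
  by exists x, y, a, b.
have [g' Gg' el'] := colon_pair_lm Qab.
have [<-|ne] := classic (g' = g); first by exists a, b.
exfalso; apply: (G_reduced hG Gg Gg' (nesym ne) (G_coef_lm_neq0 hG Gg)).
by exists x, y; rewrite el'.
Qed.

Theorem initially_koszul_PBW : PBW_lm_condition G.
Proof.
split.
  move=> g Gg m; rewrite -mcoeff_neq0 -[m]fmK => gm.
  have [a [b [el _]]] := G_lm_colon_pair Gg.
  apply/eqP; rewrite eqn_leq (standard_size hI (G_ideal hG Gg) gm) andbT.
  by rewrite -[2%N]/(size [:: a; b]) -el lm_supp_size.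
move=> a b c cb [g Gg el]; have [a' [b' [el' Qab]]] := G_lm_colon_pair Gg.
rewrite el in el'; case: el' => <- <- in Qab.
have [j _ hj] := hK a.
apply/colon_pair_lm/(colon_pairP hj); exact: ltn_trans (proj1 (colon_pairP hj b) Qab).
Qed.

End KoszulPBW.

Section MonomialIdeal.
Variables (k : fieldType) (n : nat).
Local Notation F := (freealg k n).
Local Notation word := (seq 'I_n).
Variables (I G : F -> Prop).
Hypothesis hI : standard_ideal I.
Hypothesis hG : reduced_GB I G.

Definition lm_basis (f : F) := exists2 g, G g & f = mono k (lm g).

Definition lm_divisible (w : word) := exists2 g, G g & wdivides (lm g) w.

Lemma lm_idealP f : lm_ideal G f <-> supp_in lm_divisible f.
Proof.
split.
  case=> [l [Hl ->]]; rewrite big_seq; apply: supp_in_sum => t tl w.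
  case/coef_mulM_neq0 => [x [m [y [-> _ hm _]]]].
  have [g Gg et] := Hl t tl; rewrite et in hm.
  by exists g => //; exists x, y; rewrite (coef_mono_neq0 hm).
move: f; apply: span_ind.
- by exists [::]; split => //; rewrite big_nil.
- move=> f g [l1 [H1 ->]] [l2 [H2 ->]]; exists (l1 ++ l2); rewrite big_cat.
  by split => // t; rewrite mem_cat => /orP[/H1|/H2].
- move=> c f [l [H ->]]; exists (map (fun t => ((c *: t.1.1, t.1.2), t.2)) l); split.
    by move=> t /mapP [t' /H Ht' ->].
  by rewrite big_map scaler_sumr; apply: eq_bigr => t _; rewrite /= -!scalerAl.
move=> w [g Gg [x [y ew]]]; exists [:: ((mono k x, mono k (lm g)), mono k y)].
split; first by move=> t; rewrite inE => /eqP -> /=; exists g.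
by rewrite big_seq1 /= !monoM ew catA.
Qed.

Lemma lm_ideal_is_ideal : is_ideal (lm_ideal G).
Proof.
split.
- by apply/lm_idealP; apply: supp_in0.
- by move=> a b /lm_idealP Ha /lm_idealP Hb; apply/lm_idealP; apply: supp_inD.
move=> a b c /lm_idealP Hb; apply/lm_idealP => w.
case/coef_mulM_neq0 => [x [m [y [ew _ /Hb [g Gg dv] _]]]].
by exists g => //; apply: wdivides_trans dv _; exists x, y.
Qed.

Lemma lm_ideal_standard : standard_ideal (lm_ideal G).
Proof.
split; first exact: lm_ideal_is_ideal.
  move=> f d /lm_idealP Hf; apply/lm_idealP => w; rewrite coef_hcomp.
  by case: ifP => [_ /Hf//|_]; rewrite eqxx.
move=> f /lm_idealP Hf m; rewrite -mcoeff_neq0 -[m]fmK => /Hf [g Gg dv].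
exact: leq_trans (G_size_lm hI hG Gg) (wdivides_size dv).
Qed.

Lemma lm_ideal_reduced_GB : reduced_GB (lm_ideal G) lm_basis.
Proof.
split.
- move=> _ [g Gg ->]; apply/lm_idealP => w /coef_mono_neq0 ->.
  by exists g => //; apply: wdivides_refl.
- move=> _ [g Gg ->]; split; first exact: mono_neq0.
  by rewrite /lc lm_mono coef_mono eqxx.
- move=> f /lm_idealP Hf f0; have [g Gg dv] := Hf _ (coef_lm_neq0 f0).
  by exists (mono k (lm g)); [exists g|rewrite lm_mono].
move=> _ _ [h1 Gh1 ->] [h2 Gh2 ->] ne m.
rewrite -mcoeff_neq0 -[m]fmK => /coef_mono_neq0 ->; rewrite lm_mono.
apply: (G_reduced hG Gh1 Gh2); last exact: (G_coef_lm_neq0 hG Gh1).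
by move=> e; apply: ne; rewrite e.
Qed.

Lemma quadratic_mono (w : word) : quadratic (mono k w) <-> size w = 2%N.
Proof.
split; first by move/(_ (FMonom w)); apply; rewrite /mono msuppU1 fset11.
by move=> sw m; rewrite /mono msuppU1 inE => /eqP ->.
Qed.

Lemma quadratic_G g : G g -> quadratic g <-> size (lm g) = 2%N.
Proof.
move=> Gg; split.
  by move/(_ (FMonom (lm g))); apply; rewrite -mcoeff_neq0 (G_coef_lm_neq0 hG Gg).
move=> s m; rewrite -mcoeff_neq0 -[m]fmK => gm.
apply/eqP; rewrite eqn_leq (standard_size hI (G_ideal hG Gg) gm) andbT.
by rewrite -s lm_supp_size.
Qed.

Lemma lm_pair_lm_basis a b : lm_pair lm_basis a b <-> lm_pair G a b.
Proof.
split; first by case=> _ [g Gg ->]; rewrite lm_mono => e; exists g.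
by case=> g Gg e; exists (mono k (lm g)); [exists g|rewrite lm_mono].
Qed.

Lemma PBW_lm_basis : PBW_lm_condition G <-> PBW_lm_condition lm_basis.
Proof.
split; case=> quad down; split.
- by move=> _ [g Gg ->]; apply/quadratic_mono/(quadratic_G Gg)/quad.
- by move=> a b c cb /lm_pair_lm_basis Lab; apply/lm_pair_lm_basis/(down a b c cb).
- by move=> g Gg; apply/(quadratic_G Gg)/quadratic_mono/quad; exists g.
- by move=> a b c cb /lm_pair_lm_basis Lab; apply/lm_pair_lm_basis/(down a b c cb).
Qed.

End MonomialIdeal.

Theorem initially_koszul_iff_PBW (k : fieldType) (n : nat) (I G : freealg k n -> Prop) :
  standard_ideal I -> reduced_GB I G ->
  (initially_koszul I <-> PBW_lm_condition G).
Proof.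
by move=> hI hG; split; [apply: initially_koszul_PBW | apply: PBW_initially_koszul].
Qed.

Theorem mainTheorem7 (k : fieldType) (n : nat)
    (I G : freealg k n -> Prop) :
  standard_ideal I -> reduced_GB I G ->
  (initially_koszul I <-> PBW_lm_condition G) /\
  (initially_koszul I <-> initially_koszul (lm_ideal G)).
Proof.
move=> hI hG; split; first exact: initially_koszul_iff_PBW.
rewrite (initially_koszul_iff_PBW hI hG).
rewrite (initially_koszul_iff_PBW (lm_ideal_standard hI hG) (lm_ideal_reduced_GB hG)).
exact: (PBW_lm_basis hI hG).
Qed.
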